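(* Let $L\ge 1$, let $M_1,\dots,M_5\ge 2$, $N_1,\dots,N_4\ge 1$, and let $K_5\ge 2$ be an integer. For $l=1,\dots,L$ and $n=1,\dots,5$ let $\omega_{l,n}\in\mathbb{R}$, and put $\boldsymbol{\Phi}_n=\mathrm{Diag}(e^{\jmath\omega_{1,n}},\dots,e^{\jmath\omega_{L,n}})$. For $n=1,2,3,4$ assume the following: (i) $\boldsymbol{T}_n\in\mathbb{C}^{M_n\times N_n}$ satisfies $\boldsymbol{J}_{n,1}\boldsymbol{T}_n=\boldsymbol{J}_{n,2}\boldsymbol{T}_n\boldsymbol{F}_n$ for some non-singular $\boldsymbol{F}_n\in\mathbb{C}^{N_n\times N_n}$, where $\boldsymbol{J}_{n,1}=[\boldsymbol{I}_{M_n-1},\boldsymbol{0}_{(M_n-1)\times 1}]$ and $\boldsymbol{J}_{n,2}=[\boldsymbol{0}_{(M_n-1)\times 1},\boldsymbol{I}_{M_n-1}]$; (ii) writing $\boldsymbol{T}_n^{\mathrm{H}}=[\boldsymbol{t}_{n,1},\dots,\boldsymbol{t}_{n,M_n}]$ with $\boldsymbol{t}_{n,m}\in\mathbb{C}^{N_n}$, $\boldsymbol{Q}_n\in\mathbb{C}^{N_n\times N_n}$ is a matrix with $\boldsymbol{Q}_n\boldsymbol{t}_{n,M_n}=\boldsymbol{0}$ and $\boldsymbol{Q}_n\boldsymbol{F}_n^{\mathrm{H}}\boldsymbol{t}_{n,1}=\boldsymbol{0}$, and $\boldsymbol{L}_{n,1}=\boldsymbol{Q}_n$, $\boldsymbol{L}_{n,2}=\boldsymbol{Q}_n\boldsymbol{F}_n^{\mathrm{H}}$.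 Let $\boldsymbol{B}_n=\boldsymbol{T}_n^{\mathrm{H}}\boldsymbol{A}_n^{(M_n)}$ for $n=1,\dots,4$ and $\boldsymbol{P}=\boldsymbol{B}_1\odot\boldsymbol{B}_2\odot\boldsymbol{B}_3\odot\boldsymbol{B}_4\odot\boldsymbol{A}_5^{(K_5)}$. Define, for $i=1,2$, $\breve{\boldsymbol{J}}_{n,i}=\boldsymbol{I}_{N_1}\otimes\cdots\otimes\boldsymbol{L}_{n,i}\otimes\cdots\otimes\boldsymbol{I}_{N_4}\otimes\boldsymbol{I}_{K_5}$ for $n=1,2,3,4$ (with $\boldsymbol{L}_{n,i}$ in the $n$-th Kronecker factor and identities $\boldsymbol{I}_{N_k}$ in the other factors $k\neq n$, $k\le 4$), and $\breve{\boldsymbol{J}}_{5,i}=\boldsymbol{I}_{N_1}\otimes\boldsymbol{I}_{N_2}\otimes\boldsymbol{I}_{N_3}\otimes\boldsymbol{I}_{N_4}\otimes\bar{\boldsymbol{J}}_{5,i}$, where $\bar{\boldsymbol{J}}_{5,1}=[\boldsymbol{I}_{K_5-1},\boldsymbol{0}_{(K_5-1)\times1}]$ and $\bar{\boldsymbol{J}}_{5,2}=[\boldsymbol{0}_{(K_5-1)\times1},\boldsymbol{I}_{K_5-1}]$. Then for every $n=1,\dots,5$, $$\breve{\boldsymbol{J}}_{n,1}\boldsymbol{P}\boldsymbol{\Phi}_n=\breve{\boldsymbol{J}}_{n,2}\boldsymbol{P}.$$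
   Context: $\jmath$ is the imaginary unit. For $M\ge1$ and $\omega\in\mathbb{R}$, $\boldsymbol{a}^{(M)}(\omega)=[1,e^{\jmath\omega},\dots,e^{\jmath(M-1)\omega}]^{\mathrm{T}}$, and for any positive integer $K$, $\boldsymbol{A}_n^{(K)}=[\boldsymbol{a}^{(K)}(\omega_{1,n}),\dots,\boldsymbol{a}^{(K)}(\omega_{L,n})]\in\mathbb{C}^{K\times L}$. $\otimes$ is the Kronecker product and $\odot$ is the Khatri–Rao (column-wise Kronecker) product. $(\cdot)^{\mathrm{H}}$ is conjugate transpose. *)

From HB Require Import structures.
From mathcomp Require Import all_boot all_order all_algebra.
From mathcomp Require Import all_classical all_reals all_analysis.
From mathcomp Require Import complex mxtens.
Set Implicit Arguments. Unset Strict Implicit. Unset Printing Implicit Defensive.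
Import Order.TTheory GRing.Theory Num.Theory.
Local Open Scope ring_scope.
Local Open Scope complex_scope.

Definition expj {R : realType} (x : R) : R[i] := cos x +i* sin x.

Definition ctmx {R : realType} {m n : nat} (A : 'M[R[i]]_(m, n)) : 'M[R[i]]_(n, m) :=
  (map_mx (@conjc R) A)^T.

(* steering matrix A^{(K)} = [a^{(K)}(w_1), ..., a^{(K)}(w_L)],
   entries e^{j k w_l}, k = 0..K-1 *)
Definition steer {R : realType} (K L : nat) (w : 'I_L -> R) : 'M[R[i]]_(K, L) :=
  \matrix_(k < K, l < L) expj (k%:R * w l).

Definition Phimx {R : realType} (L : nat) (w : 'I_L -> R) : 'M[R[i]]_L :=
  diag_mx (\row_(l < L) expj (w l)).

Definition khatri_rao {T : pzRingType} {m p L : nat}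
  (A : 'M[T]_(m, L)) (B : 'M[T]_(p, L)) : 'M[T]_(m * p, L) :=
  \matrix_(i < m * p, l < L) (col l A *t col l B) i ord0.

Definition Jsel1 {T : pzRingType} (M : nat) : 'M[T]_(M.-1, M) :=
  \matrix_(i < M.-1, j < M) ((j : nat) == i)%:R.
Definition Jsel2 {T : pzRingType} (M : nat) : 'M[T]_(M.-1, M) :=
  \matrix_(i < M.-1, j < M) ((j : nat) == i.+1)%:R.

Definition mode_hyp {R : realType} (M N : nat)
  (T : 'M[R[i]]_(M, N)) (F Q : 'M[R[i]]_N) : Prop :=
  [/\ Jsel1 M *m T = Jsel2 M *m T *m F,
      F \in unitmx,
      (forall m : 'I_M, (m : nat) = M.-1 -> Q *m col m (ctmx T) = 0)
    & (forall m : 'I_M, (m : nat) = 0%N -> Q *m ctmx F *m col m (ctmx T) = 0)].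

(** Column [l] of [P] is the Kronecker product [b_1 ⊗ b_2 ⊗ b_3 ⊗ b_4 ⊗ a]
    of the [l]-th columns of the factors, and every [J̆_{n,i}] acts on a single
    Kronecker factor, so each identity reduces to one factor.  For [n ≤ 4]
    that factor is [b = Σ_m z^m t_m] with [z = e^{jω}], and the shift
    invariance (i) reads [F^H t_{m+1} = t_m]; hence [Q F^H b] and [z Q b] are
    the same sum up to the boundary terms [Q F^H t_1] and [Q t_M], which (ii)
    kills.  For [n = 5] it is the shift invariance of a Vandermonde column. *)

From HB Require Import structures.
From mathcomp Require Import all_boot all_order all_algebra.
From mathcomp Require Import all_classical all_reals all_analysis.
From mathcomp Require Import complex mxtens.
From mathcomp Require Import ring.
Import Order.TTheory GRing.Theory Num.Theory.
Set Implicit Arguments. Unset Strict Implicit. Unset Printing Implicit Defensive.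
Local Open Scope ring_scope.

Lemma col_matrixP (T : Type) m n (A B : 'M[T]_(m, n)) :
  (forall j, col j A = col j B) <-> A = B.
Proof.
split=> [eqAB | -> //]; apply/matrixP=> i j.
by move/matrixP/(_ i ord0): (eqAB j); rewrite !mxE.
Qed.

Lemma col_mul (T : pzSemiRingType) m n p (A : 'M[T]_(m, n)) (B : 'M[T]_(n, p)) j :
  col j (A *m B) = A *m col j B.
Proof. by rewrite !colE mulmxA. Qed.

Lemma mulmx_sum_col (T : comPzSemiRingType) m n (A : 'M[T]_(m, n)) (v : 'cV_n) :
  A *m v = \sum_(j < n) v j 0 *: col j A.
Proof.
apply/matrixP=> i k; rewrite [k]ord1 !mxE summxE.
by apply: eq_bigr => j _; rewrite !mxE mulrC.
Qed.

Lemma col_mul_diag (T : comPzSemiRingType) m n (A : 'M[T]_(m, n)) (d : 'rV_n) j :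
  col j (A *m diag_mx d) = d 0 j *: col j A.
Proof. by apply/matrixP=> i k; rewrite mul_mx_diag !mxE mulrC. Qed.

Section Tensor.
Variable T : comPzRingType.

Lemma tensmxZl m n p q (a : T) (A : 'M[T]_(m, n)) (B : 'M[T]_(p, q)) :
  (a *: A) *t B = a *: (A *t B).
Proof. by apply/matrixP=> i j; rewrite !mxE mulrA. Qed.

Lemma tensmxZr m n p q (a : T) (A : 'M[T]_(m, n)) (B : 'M[T]_(p, q)) :
  A *t (a *: B) = a *: (A *t B).
Proof. by apply/matrixP=> i j; rewrite !mxE mulrCA. Qed.

Lemma tensmx_mul_col m n p q (A : 'M[T]_(m, n)) (B : 'M[T]_(p, q))
    (u : 'cV[T]_n) (v : 'cV[T]_q) :
  (A *t B) *m (u *t v : 'cV_(n * q)) = ((A *m u) *t (B *m v) : 'cV_(m * p)).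
Proof. exact: (@tensmx_mul T m n p q 1 1). Qed.

Lemma col_khatri_rao m p L (A : 'M[T]_(m, L)) (B : 'M[T]_(p, L)) l :
  col l (khatri_rao A B) = col l A *t col l B.
Proof. by apply/matrixP=> i j; rewrite [j]ord1 !mxE. Qed.

End Tensor.

Definition powers_col {T : pzRingType} K (z : T) : 'cV[T]_K :=
  \col_(k < K) z ^+ k.

Section Selection.
Variable T : pzRingType.

Lemma Jsel1_mulE M N (A : 'M[T]_(M.+1, N)) (i : 'I_M) j :
  (Jsel1 M.+1 *m A) i j = A (widen_ord (leqnSn M) i) j.
Proof.
rewrite mxE (bigD1 (widen_ord (leqnSn M) i)) //= mxE eqxx mul1r big1 ?addr0 //.
by move=> k; rewrite mxE -val_eqE /= => /negPf ->; rewrite mul0r.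
Qed.

Lemma Jsel2_mulE M N (A : 'M[T]_(M.+1, N)) (i : 'I_M) j :
  (Jsel2 M.+1 *m A) i j = A (lift ord0 i) j.
Proof.
rewrite mxE (bigD1 (lift ord0 i)) //= mxE eqxx mul1r big1 ?addr0 //.
by move=> k; rewrite mxE -val_eqE /= => /negPf ->; rewrite mul0r.
Qed.

Lemma Jsel_powers_col K (z : T) :
  Jsel2 K *m powers_col K z = z *: (Jsel1 K *m powers_col K z).
Proof.
case: K => [|K]; first by apply/matrixP=> [[]].
by apply/matrixP=> i j; rewrite [RHS]mxE Jsel1_mulE Jsel2_mulE !mxE exprS.
Qed.

End Selection.

Lemma shift_powers_col (T : comPzRingType) N M (X : 'M[T]_(N, M.+1))
    (G Q : 'M[T]_N) (z : T) :
  (forall i : 'I_M, G *m col (lift ord0 i) X = col (widen_ord (leqnSn M) i) X) ->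
  Q *m col ord_max X = 0 -> Q *m G *m col ord0 X = 0 ->
  z *: (Q *m (X *m powers_col M.+1 z)) = Q *m G *m (X *m powers_col M.+1 z).
Proof.
move=> shiftX Q_last QG_first; rewrite (mulmx_sum_col X) !mulmx_sumr.
rewrite [RHS]big_ord_recl -scalemxAr QG_first scaler0 add0r.
rewrite [in LHS]big_ord_recr /= -scalemxAr Q_last scaler0 addr0 scaler_sumr.
by apply: eq_bigr => i _; rewrite !mxE -!scalemxAr -mulmxA shiftX scalerA -exprS.
Qed.

Section Complex.
Variable R : realType.
Local Open Scope complex_scope.

Lemma expjD (x y : R) : expj (x + y) = expj x * expj y.
Proof. by rewrite /expj cosD sinD /=; congr (_ +i* _); ring. Qed.

Lemma expj_natmul (k : nat) (x : R) : expj (k%:R * x) = expj x ^+ k.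
Proof.
elim: k => [|k IHk]; first by rewrite mul0r /expj cos0 sin0 expr0.
by rewrite exprSr -addn1 natrD mulrDl mul1r expjD IHk.
Qed.

Lemma col_steer K L (w : 'I_L -> R) l :
  col l (steer K w) = powers_col K (expj (w l)).
Proof. by apply/matrixP=> k j; rewrite !mxE expj_natmul. Qed.

Lemma col_mul_Phimx m L (X : 'M[R[i]]_(m, L)) (w : 'I_L -> R) l :
  col l (X *m Phimx w) = expj (w l) *: col l X.
Proof. by rewrite col_mul_diag mxE. Qed.

Lemma ctmx_mul m n p (A : 'M[R[i]]_(m, n)) (B : 'M[R[i]]_(n, p)) :
  ctmx (A *m B) = ctmx B *m ctmx A.
Proof. by rewrite /ctmx map_mxM trmx_mul. Qed.

Lemma ctmx_row m n (A : 'M[R[i]]_(m, n)) i :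
  ctmx (row i A) = col i (ctmx A).
Proof. by rewrite /ctmx map_row tr_row. Qed.

Lemma ctmx_shift M N (T : 'M[R[i]]_(M.+1, N)) (F : 'M[R[i]]_N) (i : 'I_M) :
  Jsel1 M.+1 *m T = Jsel2 M.+1 *m T *m F ->
  ctmx F *m col (lift ord0 i) (ctmx T) = col (widen_ord (leqnSn M) i) (ctmx T).
Proof.
move=> shiftT.
have row_shift : row (widen_ord (leqnSn M) i) T = row (lift ord0 i) T *m F.
  apply/rowP=> j; move/matrixP/(_ i j): shiftT; rewrite Jsel1_mulE !mxE => ->.
  by apply: eq_bigr => k _; rewrite Jsel2_mulE !mxE.
by rewrite -!ctmx_row row_shift ctmx_mul.
Qed.

Lemma mode_hyp_powers_col M N (T : 'M[R[i]]_(M, N)) (F Q : 'M[R[i]]_N) (z : R[i]) :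
  mode_hyp T F Q ->
  z *: (Q *m (ctmx T *m powers_col M z)) = Q *m ctmx F *m (ctmx T *m powers_col M z).
Proof.
case: M T => [|M] T [shiftT _ Q_last QF_first].
  by rewrite [ctmx T]thinmx0 !mul0mx !mulmx0 scaler0.
by apply: shift_powers_col => [i||]; [exact: ctmx_shift | exact: Q_last | exact: QF_first].
Qed.

End Complex.

Theorem proposition2 (R : realType) (L M1 M2 M3 M4 M5 N1 N2 N3 N4 K5 : nat)
  (hL : (1 <= L)%N) (hM1 : (2 <= M1)%N) (hM2 : (2 <= M2)%N) (hM3 : (2 <= M3)%N)
  (hM4 : (2 <= M4)%N) (hM5 : (2 <= M5)%N)
  (hN1 : (1 <= N1)%N) (hN2 : (1 <= N2)%N) (hN3 : (1 <= N3)%N) (hN4 : (1 <= N4)%N)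
  (hK5 : (2 <= K5)%N)
  (w1 w2 w3 w4 w5 : 'I_L -> R)
  (T1 : 'M[R[i]]_(M1, N1)) (T2 : 'M[R[i]]_(M2, N2))
  (T3 : 'M[R[i]]_(M3, N3)) (T4 : 'M[R[i]]_(M4, N4))
  (F1 Q1 : 'M[R[i]]_N1) (F2 Q2 : 'M[R[i]]_N2)
  (F3 Q3 : 'M[R[i]]_N3) (F4 Q4 : 'M[R[i]]_N4)
  (H1 : mode_hyp T1 F1 Q1) (H2 : mode_hyp T2 F2 Q2)
  (H3 : mode_hyp T3 F3 Q3) (H4 : mode_hyp T4 F4 Q4) :
  let B1 := ctmx T1 *m steer M1 w1 in
  let B2 := ctmx T2 *m steer M2 w2 in
  let B3 := ctmx T3 *m steer M3 w3 in
  let B4 := ctmx T4 *m steer M4 w4 in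
  let P : 'M[R[i]]_(N1 * N2 * N3 * N4 * K5, L) :=
    khatri_rao (khatri_rao (khatri_rao (khatri_rao B1 B2) B3) B4) (steer K5 w5) in
  let I1 : 'M[R[i]]_N1 := 1%:M in
  let I2 : 'M[R[i]]_N2 := 1%:M in
  let I3 : 'M[R[i]]_N3 := 1%:M in
  let I4 : 'M[R[i]]_N4 := 1%:M in
  let I5 : 'M[R[i]]_K5 := 1%:M in
  let J11 := Q1 *t I2 *t I3 *t I4 *t I5 in
  let J12 := (Q1 *m ctmx F1) *t I2 *t I3 *t I4 *t I5 in
  let J21 := I1 *t Q2 *t I3 *t I4 *t I5 in
  let J22 := I1 *t (Q2 *m ctmx F2) *t I3 *t I4 *t I5 in
  let J31 := I1 *t I2 *t Q3 *t I4 *t I5 in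
  let J32 := I1 *t I2 *t (Q3 *m ctmx F3) *t I4 *t I5 in
  let J41 := I1 *t I2 *t I3 *t Q4 *t I5 in
  let J42 := I1 *t I2 *t I3 *t (Q4 *m ctmx F4) *t I5 in
  let J51 := I1 *t I2 *t I3 *t I4 *t (Jsel1 K5 : 'M[R[i]]_(K5.-1, K5)) in
  let J52 := I1 *t I2 *t I3 *t I4 *t (Jsel2 K5 : 'M[R[i]]_(K5.-1, K5)) in
  [/\ J11 *m P *m Phimx w1 = J12 *m P,
      J21 *m P *m Phimx w2 = J22 *m P,
      J31 *m P *m Phimx w3 = J32 *m P,
      J41 *m P *m Phimx w4 = J42 *m P
    & J51 *m P *m Phimx w5 = J52 *m P].
Proof.
cbv zeta; split; apply/col_matrixP => l;
  rewrite col_mul_Phimx !(col_mul, col_khatri_rao, col_steer) !tensmx_mul_col !mul1mx.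
- by rewrite -(mode_hyp_powers_col _ H1) !tensmxZl.
- by rewrite -(mode_hyp_powers_col _ H2) !tensmxZr !tensmxZl.
- by rewrite -(mode_hyp_powers_col _ H3) !tensmxZr !tensmxZl.
- by rewrite -(mode_hyp_powers_col _ H4) !tensmxZr !tensmxZl.
- by rewrite Jsel_powers_col !tensmxZr.
Qed.
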